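(* For every $u$, the triangle $T=P_1P_2P_3$ is inscribed in $\mathcal{E}$, has centroid $O$ (so $\mathcal{E}$ is its Steiner circumellipse), its three sides are tangent to the ellipse $x^2/a^2+y^2/b^2=1/4$ (its Steiner inellipse), and its area equals $\frac{3\sqrt3}{4}ab$. Hence, as $u$ varies, the triangles $T$ form a Poncelet family of constant area between $\mathcal{E}$ and the caustic $x^2/a^2+y^2/b^2=1/4$. Moreover, $M$ is the Steiner point of $T$.
   Context: Let $a>b>0$. Let $\mathcal{E}$ be the ellipse $x^2/a^2+y^2/b^2=1$ with center $O=(0,0)$, parametrized by $P(t)=(a\cos t,b\sin t)$. Fix $u\in\mathbb{R}$ and let $M=(a\cos u,b\sin u)$. For $i=1,2,3$ let $t_i=-u/3-2\pi(i-1)/3$ and $P_i=P(t_i)$ (the pre-images of the cusps of the negative pedal curve of $\mathcal{E}$ with respect to $M$). The Steiner point of a triangle is the fourth common point (counted with multiplicity) of its circumcircle and its Steiner circumellipse (the ellipse through the vertices centered at the centroid), besides the vertices. *)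

From Stdlib Require Import Reals Lra.
Open Scope R_scope.

Definition pt := (R * R)%type.

Definition ellP (a b t : R) : pt := (a * cos t, b * sin t).

Definition on_ellipse (a b c : R) (p : pt) : Prop :=
  (fst p)^2 / a^2 + (snd p)^2 / b^2 = c.

Definition t_i (u : R) (i : nat) : R := - u / 3 - 2 * PI * (INR i - 1) / 3.

Definition centroid (A B C : pt) : pt :=
  ((fst A + fst B + fst C) / 3, (snd A + snd B + snd C) / 3).

Definition on_line (P Q X : pt) : Prop :=
  (fst Q - fst P) * (snd X - snd P) - (snd Q - snd P) * (fst X - fst P) = 0.

Definition line_tangent_to_ellipse (a b c : R) (P Q : pt) : Prop :=
  P <> Q /\ exists! X : pt, on_line P Q X /\ on_ellipse a b c X.

Definition tri_area (A B C : pt) : R :=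
  Rabs ((fst B - fst A) * (snd C - snd A) - (snd B - snd A) * (fst C - fst A)) / 2.

Definition circ (D E F : R) (p : pt) : R :=
  (fst p)^2 + (snd p)^2 + D * fst p + E * snd p + F.

(* Standard parametrization of the Steiner circumellipse of ABC
   (the ellipse through A,B,C centred at the centroid G):
   S(t) = G + cos t (A - G) + sin t (B - C)/sqrt 3,
   with S(0) = A, S(2pi/3) = B, S(4pi/3) = C. *)
Definition steiner_param (A B C : pt) (t : R) : pt :=
  let G := centroid A B C in
  (fst G + cos t * (fst A - fst G) + sin t * (fst B - fst C) / sqrt 3,
   snd G + cos t * (snd A - snd G) + sin t * (snd B - snd C) / sqrt 3).

(* M is the Steiner point of ABC: M = S(s) is a point of the Steiner
   circumellipse and, for the circumcircle (any circle through A,B,C),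
   the common points of circle and Steiner ellipse, counted with
   multiplicity, are exactly the parameters 0, 2pi/3, 4pi/3, s (mod 2pi).
   Since t |-> circ(S(t)) is a trigonometric polynomial of degree <= 2,
   "its zeros with multiplicity are s1..s4" means it equals
   k * prod_j sin((t - s_j)/2) with k <> 0. *)
Definition is_steiner_point (A B C M : pt) : Prop :=
  exists s : R, M = steiner_param A B C s /\
    forall D E F : R,
      circ D E F A = 0 -> circ D E F B = 0 -> circ D E F C = 0 ->
      exists k : R, k <> 0 /\
        forall t : R,
          circ D E F (steiner_param A B C t) =
          k * sin (t / 2) * sin ((t - 2 * PI / 3) / 2)
            * sin ((t - 4 * PI / 3) / 2) * sin ((t - s) / 2).

From Stdlib Require Import Reals.
From Stdlib Require Import Lra Nsatz.
Open Scope R_scope.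

(* With θ = -u/3 the vertices are P(θ), P(θ - 2π/3), P(θ - 4π/3):
   the images, under the affine map (x,y) ↦ (a x, b y), of an equilateral
   triangle inscribed in the unit circle.  Everything is therefore reduced to
   unit-circle trigonometry, using the closed forms of rotation by a third of
   a turn and the triple-angle formulas.
   - The affine map sends circles x²+y² = k to ellipses and lines to lines,
     so incidence (inscription, tangency) can be checked on the circle: each
     side is a chord subtending 2π/3, whose only point at distance 1/2 from
     the centre is its midpoint.
   - The centroid is O, and the standard Steiner parametrisation S(t) of the
     triangle is exactly P(θ - t), so the Steiner circumellipse is E.
   - A circle through the three vertices has its coefficients forced to
     2F = -(a²+b²), 2Da = -(a²-b²)cos 3θ, 2Eb = -(a²-b²)sin 3θ; hence along
     E it equals (a²-b²)/2 (cos 2φ - cos(3θ-φ)), which factors by the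
     sum-to-product formula and sin 3x = 4 sin x sin(x-π/3) sin(x-2π/3) into
     the four half-angle sines of the Steiner-point definition, the fourth
     root being s = 4θ, i.e. S(4θ) = P(-3θ) = P(u) = M. *)

(* Pythagoras on the unit circle, as a product (nsatz does not reify [^]). *)
Lemma cos_sin_sq (x : R) : cos x * cos x + sin x * sin x = 1.
Proof. pose proof (sin2_cos2 x) as H. unfold Rsqr in H. lra. Qed.

Lemma pow2_mult (x : R) : x ^ 2 = x * x.
Proof. ring. Qed.

Lemma cos_sub_third (x : R) : cos (x - 2*PI/3) = (- cos x + sqrt 3 * sin x) / 2.
Proof.
  rewrite cos_minus. replace (2*PI/3) with (PI - PI/3) by field.
  rewrite cos_minus, sin_minus, cos_PI, sin_PI, cos_PI3, sin_PI3. field.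
Qed.

Lemma sin_sub_third (x : R) : sin (x - 2*PI/3) = (- sin x - sqrt 3 * cos x) / 2.
Proof.
  rewrite sin_minus. replace (2*PI/3) with (PI - PI/3) by field.
  rewrite cos_minus, sin_minus, cos_PI, sin_PI, cos_PI3, sin_PI3. field.
Qed.

Lemma cos_sub_two_thirds (x : R) :
  cos (x - 4*PI/3) = (- cos x - sqrt 3 * sin x) / 2.
Proof.
  rewrite cos_minus. replace (4*PI/3) with (PI + PI/3) by field.
  rewrite cos_plus, sin_plus, cos_PI, sin_PI, cos_PI3, sin_PI3. field.
Qed.

Lemma sin_sub_two_thirds (x : R) :
  sin (x - 4*PI/3) = (- sin x + sqrt 3 * cos x) / 2.
Proof.
  rewrite sin_minus. replace (4*PI/3) with (PI + PI/3) by field.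
  rewrite cos_plus, sin_plus, cos_PI, sin_PI, cos_PI3, sin_PI3. field.
Qed.

(* nsatz works in polynomial rings: the halves in the closed forms above are
   handled by adjoining the relation 2 * /2 = 1. *)
Lemma half_inv : 2 * / 2 = 1.
Proof. field. Qed.

Ltac nsatz_halves := pose proof half_inv; unfold Rdiv in *; nsatz.

Lemma sqrt3_sq : sqrt 3 * sqrt 3 = 3.
Proof. apply sqrt_sqrt. lra. Qed.

Lemma cos_3a (x : R) : cos (3 * x) = 4 * (cos x * cos x * cos x) - 3 * cos x.
Proof.
  replace (3 * x) with (2 * x + x) by ring.
  rewrite cos_plus, cos_2a, sin_2a. pose proof (cos_sin_sq x). nsatz.
Qed.

Lemma sin_3a (x : R) : sin (3 * x) = 3 * sin x - 4 * (sin x * sin x * sin x).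
Proof.
  replace (3 * x) with (2 * x + x) by ring.
  rewrite sin_plus, cos_2a, sin_2a. pose proof (cos_sin_sq x). nsatz.
Qed.

Lemma sin_3a_product (x : R) :
  sin (3 * x) = 4 * sin x * sin (x - PI/3) * sin (x - 2*PI/3).
Proof.
  rewrite sin_3a, sin_sub_third, sin_minus, cos_PI3, sin_PI3.
  pose proof (cos_sin_sq x). pose proof sqrt3_sq. nsatz_halves.
Qed.

Section AffineImage.

Variables a b : R.
Hypotheses (ha : a <> 0) (hb : b <> 0).

Lemma affine_preimage (X : pt) : X = (a * (fst X / a), b * (snd X / b)).
Proof. destruct X as [x y]. cbn [fst snd]. f_equal; field; auto. Qed.

Lemma on_ellipse_affine (k x y : R) :
  on_ellipse a b k (a * x, b * y) <-> x * x + y * y = k.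
Proof.
  unfold on_ellipse; cbn [fst snd].
  replace ((a * x) ^ 2 / a ^ 2 + (b * y) ^ 2 / b ^ 2) with (x * x + y * y)
    by (field; auto).
  tauto.
Qed.

Lemma on_line_affine (x1 y1 x2 y2 x y : R) :
  on_line (a * x1, b * y1) (a * x2, b * y2) (a * x, b * y) <->
  on_line (x1, y1) (x2, y2) (x, y).
Proof.
  unfold on_line; cbn [fst snd].
  set (d := (x2 - x1) * (y - y1) - (y2 - y1) * (x - x1)).
  replace ((a * x2 - a * x1) * (b * y - b * y1) - (b * y2 - b * y1) * (a * x - a * x1))
    with (a * b * d) by (unfold d; ring).
  split; intro H.
  - apply Rmult_integral in H as [H | H]; [| exact H].
    apply Rmult_integral in H as [H | H]; contradiction.
  - rewrite H. ring.
Qed.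

Lemma ellP_on_ellipse (t : R) : on_ellipse a b 1 (ellP a b t).
Proof. apply on_ellipse_affine. apply cos_sin_sq. Qed.

End AffineImage.

Lemma third_chord_meets_half_circle (x1 y1 x2 y2 x y : R) :
  x1 * x1 + y1 * y1 = 1 -> x2 * x2 + y2 * y2 = 1 -> x1 * x2 + y1 * y2 = -1/2 ->
  (on_line (x1, y1) (x2, y2) (x, y) /\ x * x + y * y = 1/4 <->
   (x, y) = ((x1 + x2) / 2, (y1 + y2) / 2)).
Proof.
  intros h1 h2 hdot. pose proof half_inv. assert (4 * / 4 = 1) by field.
  unfold on_line; cbn [fst snd]. split.
  - intros [hl hc].
    assert (hsq : (x - (x1 + x2) / 2)² + (y - (y1 + y2) / 2)² = 0).
    { unfold Rsqr, Rdiv in *. nsatz. }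
    apply Rplus_sqr_eq_0 in hsq as [hx hy]. f_equal; lra.
  - intro hmid. injection hmid as -> ->. split; [field | unfold Rdiv in *; nsatz].
Qed.

Lemma affine_third_chord_tangent (a b x1 y1 x2 y2 : R) :
  a <> 0 -> b <> 0 ->
  x1 * x1 + y1 * y1 = 1 -> x2 * x2 + y2 * y2 = 1 -> x1 * x2 + y1 * y2 = -1/2 ->
  line_tangent_to_ellipse a b (1/4) (a * x1, b * y1) (a * x2, b * y2).
Proof.
  intros ha hb h1 h2 hdot. split.
  - intro Heq. injection Heq as ex ey.
    apply Rmult_eq_reg_l in ex; [| exact ha].
    apply Rmult_eq_reg_l in ey; [| exact hb].
    subst. lra.
  - exists (a * ((x1 + x2) / 2), b * ((y1 + y2) / 2)). split.
    + rewrite on_line_affine, on_ellipse_affine by assumption.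
      apply third_chord_meets_half_circle; auto.
    + intros X. rewrite (affine_preimage a b ha hb X).
      rewrite on_line_affine, on_ellipse_affine by assumption.
      rewrite third_chord_meets_half_circle by assumption.
      intros hmid. injection hmid as -> ->. reflexivity.
Qed.

Section InscribedTriangle.

Variables a b θ : R.

Ltac expand_vertices :=
  unfold ellP; rewrite ?cos_sub_third, ?sin_sub_third,
    ?cos_sub_two_thirds, ?sin_sub_two_thirds.

Lemma inscribed_centroid :
  centroid (ellP a b θ) (ellP a b (θ - 2*PI/3)) (ellP a b (θ - 4*PI/3)) = (0, 0).
Proof. expand_vertices. unfold centroid; cbn [fst snd]. f_equal; field. Qed.

Lemma inscribed_steiner_param (t : R) :
  steiner_param (ellP a b θ) (ellP a b (θ - 2*PI/3)) (ellP a b (θ - 4*PI/3)) t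
  = ellP a b (θ - t).
Proof.
  assert (hr : sqrt 3 <> 0) by (apply Rgt_not_eq, sqrt_lt_R0; lra).
  unfold steiner_param. rewrite inscribed_centroid.
  expand_vertices. cbn [fst snd]. rewrite cos_minus, sin_minus.
  f_equal; field; exact hr.
Qed.

Lemma inscribed_sides_tangent :
  a <> 0 -> b <> 0 ->
  line_tangent_to_ellipse a b (1/4) (ellP a b θ) (ellP a b (θ - 2*PI/3)) /\
  line_tangent_to_ellipse a b (1/4) (ellP a b (θ - 2*PI/3)) (ellP a b (θ - 4*PI/3)) /\
  line_tangent_to_ellipse a b (1/4) (ellP a b (θ - 4*PI/3)) (ellP a b θ).
Proof.
  intros ha hb. pose proof (cos_sin_sq θ). pose proof sqrt3_sq.
  expand_vertices.
  split; [| split]; apply affine_third_chord_tangent; auto; nsatz_halves.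
Qed.

Lemma inscribed_area :
  tri_area (ellP a b θ) (ellP a b (θ - 2*PI/3)) (ellP a b (θ - 4*PI/3))
  = 3 * sqrt 3 / 4 * Rabs (a * b).
Proof.
  unfold tri_area. expand_vertices. cbn [fst snd].
  match goal with |- Rabs ?d / 2 = _ =>
    replace d with (- (3 * sqrt 3 / 2) * (a * b))
      by (pose proof (cos_sin_sq θ); pose proof sqrt3_sq; nsatz_halves) end.
  assert (hr : 0 <= sqrt 3) by apply sqrt_pos.
  rewrite Rabs_mult, Rabs_Ropp, (Rabs_pos_eq (3 * sqrt 3 / 2)) by lra.
  field.
Qed.

Lemma circle_through_vertices (D E F : R) :
  circ D E F (ellP a b θ) = 0 ->
  circ D E F (ellP a b (θ - 2*PI/3)) = 0 ->
  circ D E F (ellP a b (θ - 4*PI/3)) = 0 ->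
  2 * F = - (a * a + b * b) /\
  2 * D * a = - (a * a - b * b) * cos (3 * θ) /\
  2 * E * b = - (a * a - b * b) * sin (3 * θ).
Proof.
  pose proof (cos_sin_sq θ). pose proof sqrt3_sq.
  unfold circ. expand_vertices. cbn [fst snd]. rewrite !pow2_mult, cos_3a, sin_3a.
  intros h1 h2 h3. split; [| split]; nsatz_halves.
Qed.

Lemma circle_along_ellipse (D E F φ : R) :
  circ D E F (ellP a b θ) = 0 ->
  circ D E F (ellP a b (θ - 2*PI/3)) = 0 ->
  circ D E F (ellP a b (θ - 4*PI/3)) = 0 ->
  circ D E F (ellP a b φ) = (a * a - b * b) / 2 * (cos (2 * φ) - cos (3 * θ - φ)).
Proof.
  intros h1 h2 h3.
  destruct (circle_through_vertices D E F h1 h2 h3) as [hF [hD hE]].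
  pose proof (cos_sin_sq φ).
  unfold circ, ellP; cbn [fst snd]. rewrite !pow2_mult, cos_2a, cos_minus.
  nsatz_halves.
Qed.

Lemma inscribed_steiner_point :
  a * a <> b * b ->
  is_steiner_point (ellP a b θ) (ellP a b (θ - 2*PI/3)) (ellP a b (θ - 4*PI/3))
    (ellP a b (-3 * θ)).
Proof.
  intro hab. exists (4 * θ). split.
  { rewrite inscribed_steiner_param. f_equal. ring. }
  intros D E F h1 h2 h3. exists (-4 * (a * a - b * b)). split.
  { intro Hk. apply hab. lra. }
  intro t. rewrite inscribed_steiner_param, (circle_along_ellipse D E F _ h1 h2 h3).
  rewrite form2.
  replace ((2 * (θ - t) - (3 * θ - (θ - t))) / 2) with (- (3 * (t / 2))) by field.
  replace ((2 * (θ - t) + (3 * θ - (θ - t))) / 2) with (- ((t - 4 * θ) / 2)) by field.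
  replace ((t - 2 * PI / 3) / 2) with (t / 2 - PI / 3) by field.
  replace ((t - 4 * PI / 3) / 2) with (t / 2 - 2 * PI / 3) by field.
  rewrite !sin_neg, sin_3a_product. field.
Qed.

End InscribedTriangle.

Lemma t_i_values (u : R) :
  t_i u 1 = - u / 3 /\ t_i u 2 = - u / 3 - 2*PI/3 /\ t_i u 3 = - u / 3 - 4*PI/3.
Proof. unfold t_i; cbn [INR]. split; [| split]; field. Qed.

Theorem mainTheorem10 (a b u : R) (hb : 0 < b) (hab : b < a) :
  let M := ellP a b u in
  let P1 := ellP a b (t_i u 1) in
  let P2 := ellP a b (t_i u 2) in
  let P3 := ellP a b (t_i u 3) in
  (* inscribed in E *)
  on_ellipse a b 1 P1 /\ on_ellipse a b 1 P2 /\ on_ellipse a b 1 P3 /\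
  (* centroid O *)
  centroid P1 P2 P3 = (0, 0) /\
  (* hence the Steiner circumellipse of T is E *)
  (forall t : R, on_ellipse a b 1 (steiner_param P1 P2 P3 t)) /\
  (* sides tangent to the Steiner inellipse x^2/a^2 + y^2/b^2 = 1/4 *)
  line_tangent_to_ellipse a b (1/4) P1 P2 /\
  line_tangent_to_ellipse a b (1/4) P2 P3 /\
  line_tangent_to_ellipse a b (1/4) P3 P1 /\
  (* constant area *)
  tri_area P1 P2 P3 = 3 * sqrt 3 / 4 * (a * b) /\
  (* M is the Steiner point of T *)
  is_steiner_point P1 P2 P3 M.
Proof.
  cbv zeta.
  assert (ha : a <> 0) by lra. assert (hb0 : b <> 0) by lra.
  destruct (t_i_values u) as [-> [-> ->]].
  set (θ := - u / 3).
  replace u with (-3 * θ) at 1 by (unfold θ; field).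
  destruct (inscribed_sides_tangent a b θ ha hb0) as (T12 & T23 & T31).
  refine (conj _ (conj _ (conj _ (conj _ (conj _
           (conj T12 (conj T23 (conj T31 (conj _ _))))))))).
  - apply ellP_on_ellipse; auto.
  - apply ellP_on_ellipse; auto.
  - apply ellP_on_ellipse; auto.
  - apply inscribed_centroid.
  - intro t. rewrite inscribed_steiner_param. apply ellP_on_ellipse; auto.
  - rewrite inscribed_area, Rabs_pos_eq; [reflexivity | nra].
  - apply inscribed_steiner_point. nra.
Qed.
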